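(* In the Setting, it is impossible that $r=\sqrt{K^2-\lambda_2V}$ and $s=-\sqrt{K^2-\lambda_2V}$.
   Context: Setting: $\Gamma$ is a primitive strongly regular graph with parameters $(v,k,\lambda,\mu)$ (a $k$-regular graph on $v$ vertices, any two adjacent vertices having $\lambda$ and any two distinct non-adjacent vertices having $\mu$ common neighbours; primitive means $\Gamma$ and its complement are connected), with spectrum $k^1, r^f, s^g$ where $k>r>s$ and exponents are multiplicities. $C$ is a coclique in $\Gamma$ of size $c=\frac{vs}{s-k}$. A $K$-regular graph on $V$ vertices, neither complete nor edgeless, is a divisible design graph with parameters $(V,K,\lambda_1,\lambda_2;m,n)$ if its vertex set can be partitioned into $m$ canonical classes of size $n$ such that two distinct vertices in the same class have exactly $\lambda_1$ common neighbours and two vertices in different classes have exactly $\lambda_2$ common neighbours; it is proper unless $m=1$, $n=1$ or $\lambda_1=\lambda_2$. It is assumed that the subgraph $\Delta$ induced on $V(\Gamma)\setminus C$ is a proper divisible design graph with parameters $(V,K,\lambda_1,\lambda_2;m,n)$. It is known that the eigenvalues of $\Delta$ other than $K$ lie in $\{\pm\sqrt{K-\lambda_1},\pm\sqrt{K^2-\lambda_2V}\}$, and that the spectrum of $\Delta$ is $(k+s)^1, r^{f-c+1}, (r+s)^{c-1}, s^{g-c}$, with $c<g$. *)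

From HB Require Import structures.
From mathcomp Require Import all_boot all_order all_algebra.
Set Implicit Arguments. Unset Strict Implicit. Unset Printing Implicit Defensive.
Import Order.TTheory GRing.Theory Num.Theory.

Definition simple_graph (T : finType) (e : rel T) : Prop :=
  symmetric e /\ irreflexive e.

Definition regular (T : finType) (e : rel T) (k : nat) : Prop :=
  forall x : T, #|[set y | e x y]| = k.

Definition ncommon (T : finType) (e : rel T) (x y : T) : nat :=
  #|[set z | e x z && e y z]|.

Definition connected_graph (T : finType) (e : rel T) : Prop :=
  forall x y : T, connect e x y.

Definition compl_rel (T : finType) (e : rel T) : rel T :=
  fun x y => (x != y) && ~~ e x y.

Definition srg (T : finType) (e : rel T) (v k lam mu : nat) : Prop :=
  [/\ simple_graph e, #|T| = v, regular e k,
      (forall x y, x != y -> e x y -> ncommon e x y = lam) &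
      (forall x y, x != y -> ~~ e x y -> ncommon e x y = mu)].

Definition primitive_srg (T : finType) (e : rel T) (v k lam mu : nat) : Prop :=
  [/\ srg e v k lam mu, connected_graph e & connected_graph (compl_rel e)].

Definition coclique (T : finType) (e : rel T) (C : {set T}) : Prop :=
  forall x y, x \in C -> y \in C -> ~~ e x y.

Definition adjmx (R : pzRingType) (T : finType) (e : rel T) : 'M[R]_#|T| :=
  \matrix_(i, j) ((e (enum_val i) (enum_val j))%:R)%R.

Definition del_type (T : finType) (C : {set T}) := {x : T | x \notin C}.
Definition induced_del (T : finType) (e : rel T) (C : {set T}) :
  rel (del_type C) := fun x y => e (val x) (val y).
Arguments induced_del {T} e C _ _.

Definition complete_graph (T : finType) (e : rel T) : Prop :=
  forall x y : T, x != y -> e x y.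
Definition edgeless (T : finType) (e : rel T) : Prop :=
  forall x y : T, ~~ e x y.

Definition ddg (T : finType) (e : rel T) (V K l1 l2 m n : nat) : Prop :=
  [/\ simple_graph e, #|T| = V, regular e K,
      ~ complete_graph e /\ ~ edgeless e &
      exists P : {set {set T}},
        [/\ partition P [set: T], #|P| = m,
            (forall B, B \in P -> #|B| = n) &
            forall x y : T, x != y ->
              (pblock P x = pblock P y -> ncommon e x y = l1) /\
              (pblock P x <> pblock P y -> ncommon e x y = l2)]].

Definition proper_ddg (T : finType) (e : rel T) (V K l1 l2 m n : nat) : Prop :=
  [/\ ddg e V K l1 l2 m n, m <> 1%N, n <> 1%N & l1 <> l2].

From HB Require Import structures.
From mathcomp Require Import all_boot all_order all_algebra.
From mathcomp Require Import zify lra.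
Import Order.TTheory GRing.Theory Num.Theory.
Local Open Scope ring_scope.
Set Implicit Arguments. Unset Strict Implicit. Unset Printing Implicit Defensive.

(* With s = -r, the trace and size of the two spectra, the
   eigenvalue K of Delta and the list of admissible eigenvalues of Delta
   leave three cases:
   - c = 0 contradicts c (s - k) = v s;
   - c = 1 forces f = 0, K = k - 1 and v = k + 1, so Gamma is complete;
   - c >= 2 makes 0 = r + s an eigenvalue of Delta, whence K <= l1 and
     K = k - r; the restricted eigenvalues r, -r of Gamma give lam = mu = k - r^2,
     and two vertices of a class of Delta, twins with >= K common neighbours,
     force k <= lam + 1, so that neighbourhoods in Gamma are cliques and the
     twins would be adjacent. *)

Section Spectrum.
Variable R : idomainType.

Definition spectrum_poly (ps : seq (R * nat)) : {poly R} :=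
  \prod_(p <- ps) ('X - p.1%:P) ^+ p.2.

Definition spectrum_seq (ps : seq (R * nat)) : seq R :=
  flatten [seq nseq p.2 p.1 | p <- ps].

Lemma spectrum_polyE ps :
  spectrum_poly ps = \prod_(x <- spectrum_seq ps) ('X - x%:P).
Proof.
rewrite big_flatten big_map; apply: eq_bigr => p _.
by rewrite big_nseq iter_mulr_1.
Qed.

Lemma root_spectrum_poly ps x :
  root (spectrum_poly ps) x = has (fun p => (0 < p.2)%N && (x == p.1)) ps.
Proof.
rewrite /spectrum_poly; elim: ps => [|p ps IH].
  by rewrite big_nil (negbTE (root1 x)).
rewrite big_cons rootM IH /=; congr (_ || _).
by case: p.2 => [|j]; rewrite ?expr0 ?(negbTE (root1 x)) // root_exp_XsubC.
Qed.

Lemma char_poly_spectrum n (A : 'M[R]_n) ps :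
  char_poly A = spectrum_poly ps -> (0 < n)%N ->
  n = sumn [seq p.2 | p <- ps] /\ \tr A = \sum_(p <- ps) p.1 *+ p.2.
Proof.
rewrite spectrum_polyE => charA n_gt0.
have size_spec : size (spectrum_seq ps) = n.
  by have := size_char_poly A; rewrite charA size_prod_XsubC => -[].
split.
  rewrite -size_spec size_flatten /shape -map_comp.
  by congr sumn; apply: eq_map => p /=; rewrite size_nseq.
apply: oppr_inj; rewrite -char_poly_trace // charA -size_spec coefPn_prod_XsubC.
  rewrite big_flatten big_map; congr (- _); apply: eq_bigr => p _.
  by rewrite big_nseq iter_addr_0.
by rewrite size_spec -lt0n.
Qed.
End Spectrum.

Section AdjacencyMatrix.
Variables (R : fieldType) (T : finType) (e : rel T).
Hypotheses (e_sym : symmetric e) (e_irr : irreflexive e).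

Lemma sum_enum_val (F : T -> R) : \sum_(i < #|T|) F (enum_val i) = \sum_x F x.
Proof. by rewrite [RHS](reindex _ (onW_bij _ (@enum_val_bij T))). Qed.

Lemma sum_indicator (P : pred T) : \sum_x ((P x)%:R : R) = #|P|%:R.
Proof.
rewrite -sum1_card natr_sum [in RHS]big_mkcond /=; apply: eq_bigr => x _.
by rewrite -[x \in P]/(P x); case: (P x).
Qed.

Lemma adjmx_trace : \tr (adjmx R e) = 0.
Proof. by rewrite /mxtrace big1 // => i _; rewrite mxE e_irr. Qed.

Lemma adjmx_row_sum k : regular e k ->
  (const_mx 1 : 'rV[R]_#|T|) *m adjmx R e = k%:R *: const_mx 1.
Proof.
move=> reg; apply/matrixP => i j; rewrite !mxE.
under eq_bigr => l _ do rewrite !mxE mul1r e_sym.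
rewrite (sum_enum_val (fun y => (e (enum_val j) y)%:R)) sum_indicator.
by rewrite -(reg (enum_val j)) cardsE mulr1.
Qed.

Lemma adjmx_col_sum k : regular e k ->
  adjmx R e *m const_mx 1 = k%:R *: (const_mx 1 : 'cV[R]_#|T|).
Proof.
move=> reg; apply/matrixP => i j; rewrite !mxE.
under eq_bigr => l _ do rewrite !mxE mulr1.
rewrite (sum_enum_val (fun y => (e (enum_val i) y)%:R)) sum_indicator.
by rewrite -(reg (enum_val i)) cardsE mulr1.
Qed.

Lemma regular_eigenvalue k : regular e k -> (0 < #|T|)%N ->
  root (char_poly (adjmx R e)) k%:R.
Proof.
move=> reg T_gt0; rewrite -eigenvalue_root_char; apply/eigenvalueP.
exists (const_mx 1); first exact: adjmx_row_sum.
apply/eqP => /matrixP /(_ 0 (Ordinal T_gt0)) /eqP.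
by rewrite !mxE oner_eq0.
Qed.

Lemma adjmx_sqr i j : (adjmx R e *m adjmx R e) i j =
  (ncommon e (enum_val i) (enum_val j))%:R.
Proof.
rewrite !mxE.
under eq_bigr => l _ do rewrite !mxE -natrM mulnb (e_sym _ (enum_val j)).
rewrite (sum_enum_val (fun y => (e (enum_val i) y && e (enum_val j) y)%:R)).
by rewrite sum_indicator /ncommon cardsE.
Qed.
End AdjacencyMatrix.

Section StronglyRegular.
Variables (T : finType) (e : rel T) (v k lam mu : nat).
Hypothesis e_srg : srg e v k lam mu.

Lemma srg_adjmx_sqr (R : fieldType) :
  adjmx R e *m adjmx R e = k%:R%:M + lam%:R *: adjmx R e +
     mu%:R *: (const_mx 1 - 1%:M - adjmx R e).
Proof.
case: e_srg => -[e_sym e_irr] _ reg lam_common mu_common.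
apply/matrixP => i j; rewrite adjmx_sqr // !mxE.
have [<-|ij] := eqVneq i j.
  rewrite e_irr mulr0 addr0 mulr1n subr0 subrr mulr0 addr0.
  rewrite /ncommon -(reg (enum_val i)); congr (_%:R).
  by apply: eq_card => z; rewrite !inE andbb.
have xy : enum_val i != enum_val j by apply: contra ij => /eqP/enum_val_inj ->.
rewrite mulr0n add0r subr0.
case E: (e (enum_val i) (enum_val j)).
  by rewrite (lam_common _ _ xy E) mulr1 subrr mulr0 addr0.
by rewrite (mu_common _ _ xy (negbT E)) mulr0 add0r subr0 mulr1.
Qed.

(* A restricted eigenvalue [th] (one different from [k]) of a strongly regular
   graph is a root of [X^2 - (lam - mu) X - (k - mu)]: its eigenvectors are
   orthogonal to the all-one vector, so the all-one matrix vanishes on them. *)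
Lemma srg_eigenvalue_eq (R : fieldType) (th : R) :
  root (char_poly (adjmx R e)) th -> th != k%:R ->
  th ^+ 2 = k%:R + lam%:R * th - mu%:R - mu%:R * th.
Proof.
have [_ _ reg _ _] := e_srg.
rewrite -eigenvalue_root_char => /eigenvalueP [u uA u_neq0] th_neq_k.
set A := adjmx R e in uA *; set J1 := (const_mx 1 : 'cV[R]_#|T|).
have uJ1 : u *m J1 = 0.
  have : (th - k%:R) *: (u *m J1) = 0.
    rewrite scalerBl scalemxAl -uA -mulmxA (adjmx_col_sum _ reg) -scalemxAr.
    exact: subrr.
  by move/eqP; rewrite scaler_eq0 subr_eq0 (negbTE th_neq_k) => /eqP.
have J_rank1 : (const_mx 1 : 'M[R]_#|T|) = J1 *m const_mx 1.
  by apply/matrixP => i j; rewrite !mxE big_ord1 !mxE mulr1.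
have uAA : u *m (A *m A) = th ^+ 2 *: u.
  by rewrite mulmxA uA -scalemxAl uA scalerA expr2.
move: uAA; rewrite /A (srg_adjmx_sqr R) -/A !mulmxDr -!scalemxAr !mulmxBr.
rewrite J_rank1 mulmxA uJ1 mul0mx uA mul_mx_scalar mulmx1 sub0r => uAA.
have : (th ^+ 2 - (k%:R + lam%:R * th - mu%:R - mu%:R * th)) *: u = 0.
  rewrite scalerBl -uAA !scalerBl !scalerDl !scalerA scalerBr scalerN !scalerA.
  by rewrite [X in X - _]addrA subrr.
by move/eqP; rewrite scaler_eq0 (negbTE u_neq0) orbF subr_eq0 => /eqP.
Qed.

(* If [th] and [-th] are both restricted eigenvalues, then the quadratic above
   is [X^2 - th^2], so [lam = mu] and [mu = k - th^2]. *)
Lemma srg_opposite_eigenvalues (R : realFieldType) (th : R) : 0 < th ->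
  root (char_poly (adjmx R e)) th -> root (char_poly (adjmx R e)) (- th) ->
  th != k%:R -> - th != k%:R ->
  lam = mu /\ mu%:R = k%:R - th ^+ 2.
Proof.
move=> th_gt0 th_root thN_root th_neq_k thN_neq_k.
have eq_th := srg_eigenvalue_eq th_root th_neq_k.
have eq_thN := srg_eigenvalue_eq thN_root thN_neq_k.
have lam_mu : lam = mu.
  apply/eqP; rewrite -(eqr_nat R); apply/eqP.
  have : (lam%:R - mu%:R) * th = 0 :> R by nra.
  by move/eqP; rewrite mulf_eq0 (gt_eqF th_gt0) orbF subr_eq0 => /eqP.
by split=> //; move: eq_th; rewrite lam_mu; lra.
Qed.

(* In a strongly regular graph with [k <= lam + 1], the neighbourhood of every
   vertex is a clique: a neighbour [a] of [z] is adjacent to all of [z]'s other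
   [k - 1] neighbours. *)
Lemma srg_nbr_clique a b z : (k <= lam.+1)%N ->
  e a z -> e b z -> a != b -> e a b.
Proof.
case: e_srg => -[e_sym e_irr] _ reg lam_common _ k_le az bz ab.
have za : z != a by apply/eqP => zaE; move: az; rewrite zaE e_irr.
have common_sub : [set w | e z w && e a w] \subset [set w | e z w] :\ a.
  apply/subsetP => w; rewrite !inE => /andP [zw aw]; rewrite zw andbT.
  by apply/eqP => wa; move: aw; rewrite wa e_irr.
have common_eq : [set w | e z w && e a w] = [set w | e z w] :\ a.
  apply/eqP; rewrite eqEcard common_sub /=.
  have := cardsD1 a [set w | e z w]; rewrite inE e_sym az reg => card_nbr.
  have := lam_common z a za; rewrite e_sym az /ncommon => /(_ isT) ->.
  by move: k_le card_nbr; lia.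
have : b \in [set w | e z w] :\ a by rewrite !inE eq_sym ab e_sym bz.
by rewrite -common_eq inE => /andP [_]; rewrite e_sym.
Qed.
End StronglyRegular.

Section Neighbourhoods.
Variables (T : finType) (e : rel T).
Hypothesis e_irr : irreflexive e.

Lemma regular_twins K x y : regular e K -> (K <= ncommon e x y)%N ->
  {subset [set z | e x z] <= [set z | e y z]} /\ ~~ e x y.
Proof.
move=> reg K_le.
have common_sub : [set z | e x z && e y z] \subset [set z | e x z].
  by apply/subsetP => z; rewrite !inE => /andP [].
have common_eq : [set z | e x z && e y z] = [set z | e x z].
  by apply/eqP; rewrite eqEcard common_sub /= reg.
have nbr_sub : {subset [set z | e x z] <= [set z | e y z]}.
  by move=> z; rewrite -common_eq !inE => /andP [].
split=> //; apply/negP => exy.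
by have := nbr_sub y; rewrite !inE e_irr => /(_ exy).
Qed.

Lemma regular_complete k : regular e k -> #|T| = k.+1 -> complete_graph e.
Proof.
move=> reg card_T x y xy.
have : [set z | e x z] = [set~ x].
  apply/eqP; rewrite eqEcard cardsC1 reg card_T leqnn andbT.
  apply/subsetP => z; rewrite !inE => xz; apply/eqP => zx.
  by move: xz; rewrite zx e_irr.
by move/setP/(_ y); rewrite !inE eq_sym xy.
Qed.

(* The complement of a complete graph is edgeless, so it is connected only
   when there is at most one vertex. *)
Lemma complete_compl_connected :
  complete_graph e -> connected_graph (compl_rel e) -> (#|T| <= 1)%N.
Proof.
move=> e_complete compl_conn; apply/fintype_le1P => x y.
have [//|xy] := eqVneq y x.
case/connectP: (compl_conn x y) => -[_ yx | a p /= /andP [xa _] _].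
  by rewrite yx eqxx in xy.
by move: xa; rewrite /compl_rel => /andP [/e_complete ->].
Qed.

Lemma regular_not_edgeless_gt0 K : regular e K -> ~ edgeless e ->
  (0 < K)%N /\ (0 < #|T|)%N.
Proof.
move=> reg not_edgeless.
have [x /existsP [y exy]] : exists x, [exists y, e x y].
  apply/existsP; apply: contra_notT not_edgeless => /existsPn no_edge x y.
  by have /existsPn := no_edge x; apply.
split; last by apply/card_gt0P; exists x.
by rewrite -(reg x); apply/card_gt0P; exists y; rewrite inE.
Qed.
End Neighbourhoods.

Section DeletedCoclique.
Variables (T : finType) (e : rel T) (C : {set T}).
Local Notation eD := (induced_del e C).

Lemma induced_del_degree (x : del_type C) :
  (#|[set y | e (val x) y]| <= #|[set y | eD x y]| + #|C|)%N.
Proof.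
have nbr_sub : [set y | e (val x) y] \subset val @: [set y | eD x y] :|: C.
  apply/subsetP => y; rewrite !inE => xy.
  case yC: (y \in C); rewrite ?orbT // orbF.
  by apply/imsetP; exists (exist _ y (negbT yC)); rewrite ?inE.
apply: leq_trans (subset_leq_card nbr_sub) _.
apply: leq_trans (leq_card_setU _ _) _.
by rewrite leq_add2r leq_imset_card.
Qed.

Lemma induced_del_ncommon (x y : del_type C) :
  (ncommon eD x y <= ncommon e (val x) (val y))%N.
Proof.
rewrite /ncommon -(card_imset _ val_inj); apply: subset_leq_card.
by apply/subsetP => w /imsetP [z]; rewrite !inE => zz ->.
Qed.
End DeletedCoclique.

Lemma ddg_class_partner (T : finType) (e : rel T) V K l1 l2 m n (x : T) :
  ddg e V K l1 l2 m n -> n <> 1%N -> exists y, x != y /\ ncommon e x y = l1.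
Proof.
case=> _ _ _ _ [P [/and3P [/eqP cover_P triv_P _] _ card_class ncommon_class]].
move=> n_neq1.
have x_cover : x \in cover P by rewrite cover_P inE.
have B_in := pblock_mem x_cover.
have x_B : x \in pblock P x by rewrite mem_pblock.
have B_gt1 : (1 < #|pblock P x|)%N.
  have : (0 < #|pblock P x|)%N by apply/card_gt0P; exists x.
  by rewrite card_class //; lia.
have [y] : exists y, y \in pblock P x :\ x.
  by apply/card_gt0P; move: B_gt1; rewrite (cardsD1 x) x_B; lia.
rewrite !inE => /andP [yx y_B].
have xy : x != y by rewrite eq_sym.
exists y; split=> //.
by apply: (proj1 (ncommon_class x y xy)); rewrite (def_pblock triv_P B_in y_B).
Qed.

(* The setting of the theorem under the assumption [s = -r]: [e] is the
   strongly regular graph Gamma and [eD] the divisible design graph Delta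
   obtained by deleting the coclique [C]. *)
Section SymmetricSpectrum.
Variables (R : rcfType) (T : finType) (e : rel T) (v k lam mu : nat) (r : R)
  (f g : nat) (C : {set T}) (V K l1 l2 m n : nat).
Local Notation c := #|C|.
Local Notation eD := (induced_del e C).

Hypothesis G_srg : srg e v k lam mu.
Hypothesis G_compl_conn : connected_graph (compl_rel e).
Hypothesis r_gt0 : 0 < r.
Hypothesis r_lt_k : r < k%:R.
Hypothesis G_spec : char_poly (adjmx R e) =
  spectrum_poly [:: (k%:R, 1%N); (r, f); (- r, g)].
Hypothesis C_card : c%:R * (- r - k%:R) = v%:R * - r.
Hypothesis D_ddg : ddg eD V K l1 l2 m n.
Hypothesis D_classes : n <> 1%N.
Hypothesis D_roots : forall x : R,
  root (char_poly (adjmx R eD)) x -> x != K%:R ->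
  x \in [:: Num.sqrt (K%:R - l1%:R); - Num.sqrt (K%:R - l1%:R); r; - r].
Hypothesis D_spec : char_poly (adjmx R eD) =
  spectrum_poly [:: (k%:R - r, 1%N); (r, (f + 1 - c)%N);
                    (0, (c - 1)%N); (- r, (g - c)%N)].
Hypothesis c_lt_g : (c < g)%N.

(* [lra] only reads the local context, so the section hypotheses it needs are
   restated locally in the proofs below. *)

Lemma D_degree_gt0 : (0 < K)%N /\ (0 < #|(del_type C : finType)|)%N.
Proof.
case: D_ddg => _ _ regD [_ D_edge] _.
exact: regular_not_edgeless_gt0 regD D_edge.
Qed.

Lemma G_size_trace : v = (1 + f + g)%N /\ k%:R + r * f%:R - r * g%:R = 0.
Proof.
have [[_ e_irr] card_T _ _ _] := G_srg.
have [_ /card_gt0P [x0 _]] := D_degree_gt0.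
have T_gt0 : (0 < #|T|)%N by apply/card_gt0P; exists (val x0).
have [size_T trace_A] := char_poly_spectrum G_spec T_gt0.
rewrite adjmx_trace // !big_cons big_nil /= in trace_A.
rewrite -card_T size_T /= addn0 addnA; split=> //.
rewrite mulr1n mulNrn addr0 addrA in trace_A.
by rewrite -[r *+ f]mulr_natr -[r *+ g]mulr_natr in trace_A.
Qed.

Lemma D_trace :
  k%:R - r + r * (f + 1 - c)%:R - r * (g - c)%:R = 0.
Proof.
have [[_ eD_irr] _ _ _ _] := D_ddg.
have [_ D_gt0] := D_degree_gt0.
have [_ trace_A] := char_poly_spectrum D_spec D_gt0.
rewrite adjmx_trace // !big_cons big_nil /= mul0rn add0r addr0 in trace_A.
rewrite mulr1n mulNrn addrA in trace_A.
by rewrite -[r *+ _]mulr_natr -[r *+ (g - c)]mulr_natr in trace_A.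
Qed.

Lemma D_rootP x : root (char_poly (adjmx R eD)) x ->
  [|| x == k%:R - r, (0 < f + 1 - c)%N && (x == r),
      (0 < c - 1)%N && (x == 0) | (0 < g - c)%N && (x == - r)].
Proof. by rewrite D_spec root_spectrum_poly /= orbF. Qed.

(* [c (s - k) = v s] with [s < 0 < v] rules out [c = 0]. *)
Lemma card_C_gt0 : (0 < c)%N.
Proof.
have [_ /card_gt0P [x0 _]] := D_degree_gt0.
have [_ card_T _ _ _] := G_srg.
have v_gt0 : (0 < v)%N by rewrite -card_T; apply/card_gt0P; exists (val x0).
rewrite lt0n; apply/eqP => c0; move: C_card; rewrite c0 mul0r => /esym/eqP.
by rewrite mulf_eq0 pnatr_eq0 oppr_eq0 (gt_eqF r_gt0) orbF (gtn_eqF v_gt0).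
Qed.

(* With a single deleted vertex, the equations force [f = 0], [K = k - 1] and
   [g = k], so [v = k + 1] and the graph is complete: its complement cannot be
   connected. *)
Lemma card_C_neq1 : c != 1%N.
Proof.
apply/eqP => c1.
have [v_eq G_trace] := G_size_trace.
have [_ D_gt0] := D_degree_gt0.
have [[_ e_irr] card_T reg _ _] := G_srg.
have [[eD_sym _] _ regD _ _] := D_ddg.
have f0 : f = 0%N.
  have : f%:R * r = 0 :> R by move: C_card; rewrite c1 v_eq !natrD; nra.
  by move/eqP; rewrite mulf_eq0 (gt_eqF r_gt0) orbF pnatr_eq0 => /eqP.
have K_eq : K%:R = k%:R - r.
  move/D_rootP: (regular_eigenvalue R eD_sym regD D_gt0); rewrite f0 c1 /=.
  case/orP => [/eqP // | /andP [_ /eqP K_opp]].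
  by move: (ler0n R K); rewrite K_opp oppr_ge0 leNgt r_gt0.
have /card_gt0P [x0 _] := D_gt0.
have k_le : (k <= K + 1)%N.
  by rewrite -(reg (val x0)) -(regD x0) -c1 induced_del_degree.
have K_lt_k : (K < k)%N by rewrite -(ltr_nat R) K_eq ltrBlDr ltrDl r_gt0.
have k_eq : k = K.+1 by lia.
have r1 : r = 1 by move: K_eq; rewrite k_eq -natr1; lra.
have v_eq' : v = k.+1.
  apply/eqP; rewrite -(eqr_nat R) v_eq f0 -natr1 !natrD; apply/eqP.
  by move: G_trace; rewrite r1 f0; lra.
have G_complete := regular_complete e_irr reg (etrans card_T v_eq').
have := complete_compl_connected G_complete G_compl_conn.
by rewrite card_T v_eq' k_eq.
Qed.

Section ManyDeleted.
Hypothesis c_gt1 : (1 < c)%N.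

(* [0 = r + s] is an eigenvalue of the deleted graph; as it is none of [K],
   [r], [-r], it must be [sqrt (K - l1)], whence [K <= l1]. *)
Lemma K_le_l1 : (K <= l1)%N.
Proof.
have [K_gt0 _] := D_degree_gt0.
have zero_root : root (char_poly (adjmx R eD)) 0.
  rewrite D_spec root_spectrum_poly /= [(0 < c - 1)%N]subn_gt0 c_gt1.
  by rewrite eqxx !orbT.
have := D_roots zero_root; rewrite eq_sym pnatr_eq0 -lt0n K_gt0 => /(_ isT).
rewrite !inE => /or4P [] /eqP /esym /eqP.
- by rewrite sqrtr_eq0 subr_le0 ler_nat.
- by rewrite oppr_eq0 sqrtr_eq0 subr_le0 ler_nat.
- by rewrite (gt_eqF r_gt0).
- by rewrite oppr_eq0 (gt_eqF r_gt0).
Qed.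

(* The degree [K] of the deleted graph is one of its eigenvalues; comparing
   with the eigenvalue [k + s = k - r] shows that [K = k - r]. *)
Lemma D_degree_eq : K%:R = k%:R - r.
Proof.
have [K_gt0 D_gt0] := D_degree_gt0.
have [[eD_sym _] _ regD _ _] := D_ddg.
have sqrt0 : Num.sqrt (K%:R - l1%:R) = 0 :> R.
  by apply/eqP; rewrite sqrtr_eq0 subr_le0 ler_nat K_le_l1.
have top_root : root (char_poly (adjmx R eD)) (k%:R - r).
  by rewrite D_spec root_spectrum_poly /= eqxx.
have [r_pos r_k] := (r_gt0, r_lt_k).
have K_pos : 0 < K%:R :> R by rewrite ltr0n.
have [-> // | K_neq] := eqVneq K%:R (k%:R - r).
have top_neq : k%:R - r != K%:R by rewrite eq_sym.
move/D_rootP: (regular_eigenvalue R eD_sym regD D_gt0).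
case/or4P => [/eqP // | /andP [_ /eqP K_r] | /andP [_ /eqP K0] | /andP [_ /eqP K_opp]];
  try lra.
have := D_roots top_root top_neq; rewrite !inE sqrt0 oppr0.
by case/or4P => /eqP; lra.
Qed.

(* Comparing the traces of both adjacency matrices shows that the
   multiplicity [f] of [r] is positive. *)
Lemma f_gt0 : (0 < f)%N.
Proof.
rewrite lt0n; apply/eqP => f0.
have [_ G_trace] := G_size_trace.
have D_tr := D_trace.
have fc0 : (f + 1 - c = 0)%N by rewrite f0 add0n; apply/eqP; rewrite subn_eq0 ltnW.
rewrite fc0 mulr0 addr0 natrB ?(ltnW c_lt_g) // in D_tr.
rewrite f0 mulr0 addr0 in G_trace.
have : r * (c%:R - 1) = 0 by nra.
move/eqP; rewrite mulf_eq0 (gt_eqF r_gt0) subr_eq0 pnatr_eq1 => /eqP c1.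
by move: c_gt1; rewrite c1.
Qed.

(* Both [r] and [-r] are restricted eigenvalues of the strongly regular graph,
   so [lam = mu = k - r^2]. *)
Lemma G_lam_eq_mu : lam = mu /\ mu%:R = k%:R - r ^+ 2.
Proof.
have g_gt0 : (0 < g)%N by apply: leq_ltn_trans c_lt_g.
have r_root : root (char_poly (adjmx R e)) r.
  by rewrite G_spec root_spectrum_poly /= f_gt0 eqxx orbT.
have rN_root : root (char_poly (adjmx R e)) (- r).
  by rewrite G_spec root_spectrum_poly /= g_gt0 eqxx !orbT.
have [r_pos r_k] := (r_gt0, r_lt_k).
have := srg_opposite_eigenvalues G_srg r_gt0 r_root rN_root.
by apply; apply/eqP; lra.
Qed.

(* Two vertices of a class of the deleted graph are twins there, hence
   non-adjacent with at least [K] common neighbours in the strongly regular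
   graph; this forces [k <= lam + 1], so neighbourhoods are cliques, and the
   twins, having a common neighbour, would be adjacent. *)
Lemma many_deleted_absurd : False.
Proof.
have [K_gt0 D_gt0] := D_degree_gt0.
have [[_ eD_irr] _ regD _ _] := D_ddg.
have [_ _ _ _ G_mu] := G_srg.
have [lam_mu mu_eq] := G_lam_eq_mu.
have /card_gt0P [x _] := D_gt0.
have [y [xy ncommon_xy]] := ddg_class_partner x D_ddg D_classes.
have K_le : (K <= ncommon eD x y)%N by rewrite ncommon_xy K_le_l1.
have [nbr_sub xy_nadj] := regular_twins eD_irr regD K_le.
have vxy : val x != val y by apply: contra xy => /eqP/val_inj ->.
have K_le_mu : (K%:R : R) <= mu%:R.
  rewrite ler_nat -(G_mu _ _ vxy xy_nadj).
  exact: leq_trans K_le (induced_del_ncommon _ _ _).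
have k_le : (k <= lam.+1)%N.
  rewrite D_degree_eq mu_eq in K_le_mu.
  have r_pos := r_gt0.
  have r_le1 : r <= 1 by nra.
  by rewrite -(ler_nat R) -natr1 lam_mu mu_eq; nra.
have /card_gt0P [z x_z] : (0 < #|[set z | eD x z]|)%N by rewrite regD.
have y_z := nbr_sub z x_z.
rewrite !inE in x_z y_z.
by move/negP: xy_nadj; apply; apply: (srg_nbr_clique G_srg k_le x_z y_z vxy).
Qed.
End ManyDeleted.
End SymmetricSpectrum.

Unset Implicit Arguments.
Theorem mainTheorem7 (R : rcfType) (T : finType) (e : rel T)
  (v k lam mu : nat) (r s : R) (f g : nat) (C : {set T})
  (V K l1 l2 m n : nat) :
  primitive_srg e v k lam mu ->
  k%:R > r -> r > s ->
  char_poly (adjmx R e) =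
    ('X - (k%:R)%:P) * ('X - r%:P) ^+ f * ('X - s%:P) ^+ g ->
  coclique e C ->
  (#|C|%:R : R) = v%:R * s / (s - k%:R) ->
  proper_ddg (induced_del e C) V K l1 l2 m n ->
  (* known facts from the Setting *)
  (forall x : R, root (char_poly (adjmx R (induced_del e C))) x -> x != K%:R ->
     x \in [:: Num.sqrt (K%:R - l1%:R); - Num.sqrt (K%:R - l1%:R);
               Num.sqrt (K%:R ^+ 2 - l2%:R * V%:R);
               - Num.sqrt (K%:R ^+ 2 - l2%:R * V%:R)]) ->
  char_poly (adjmx R (induced_del e C)) =
    ('X - (k%:R + s)%:P) * ('X - r%:P) ^+ (f + 1 - #|C|)
      * ('X - (r + s)%:P) ^+ (#|C| - 1) * ('X - s%:P) ^+ (g - #|C|) ->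
  (#|C| < g)%N ->
  ~ (r = Num.sqrt (K%:R ^+ 2 - l2%:R * V%:R) /\
     s = - Num.sqrt (K%:R ^+ 2 - l2%:R * V%:R)).
Proof.
move=> [G_srg _ G_compl_conn] r_lt_k s_lt_r G_char _ C_card
  [D_ddg _ D_classes _] D_roots D_char c_lt_g [r_sqrt s_sqrt].
have s_opp : s = - r by rewrite s_sqrt r_sqrt.
rewrite -r_sqrt in D_roots; clear s_sqrt; subst s.
have r_gt0 : 0 < r by lra.
have G_spec : char_poly (adjmx R e) =
    spectrum_poly [:: (k%:R, 1%N); (r, f); (- r, g)].
  by rewrite G_char /spectrum_poly !big_cons big_nil /= expr1 mulr1 mulrA.
have D_spec : char_poly (adjmx R (induced_del e C)) =
    spectrum_poly [:: (k%:R - r, 1%N); (r, (f + 1 - #|C|)%N);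
                      (0, (#|C| - 1)%N); (- r, (g - #|C|)%N)].
  by rewrite D_char /spectrum_poly !big_cons big_nil /= expr1 mulr1 addrN !mulrA.
have C_eq : #|C|%:R * (- r - k%:R) = v%:R * - r.
  by rewrite C_card divfK //; apply/eqP; lra.
have := card_C_gt0 G_srg r_gt0 C_eq D_ddg.
have := card_C_neq1 G_srg G_compl_conn r_gt0 r_lt_k G_spec C_eq D_ddg D_classes
  D_spec c_lt_g.
have := many_deleted_absurd G_srg r_gt0 r_lt_k G_spec D_ddg D_classes D_roots
  D_spec c_lt_g.
by case: #|C| => [|[|c]].
Qed.
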